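(* Let $X,Y\in\Sigma^*$ and let $\mathcal{A},\mathcal{A}'$ be alignments of $X$ onto $Y$. If $\mathcal{A}$ and $\mathcal{A}'$, viewed as paths in the alignment graph of $X$ and $Y$, do not contain any common diagonal edge, then $\mathrm{selfed}(X)\le\mathrm{ed}_{\mathcal{A}}(X,Y)+\mathrm{ed}_{\mathcal{A}'}(X,Y)$.
   Context: An alignment of $X$ onto $Y$ is a sequence $(x_t,y_t)_{t=0}^m$ from $(0,0)$ to $(|X|,|Y|)$ with steps $(1,0)$, $(0,1)$ or $(1,1)$; viewed as a path in the grid graph on $[0,|X|]\times[0,|Y|]$, a step $(x,y)\to(x+1,y+1)$ is a diagonal edge. $\mathrm{ed}_{\mathcal{A}}(X,Y)$ is the unweighted cost of $\mathcal{A}$: the number of steps $(1,0)$, $(0,1)$, and diagonal steps $(x,y)\to(x+1,y+1)$ with $X[x]\ne Y[y]$. A self-alignment of $X$ is an alignment of $X$ onto $X$ containing no edge $(x,x)\to(x+1,x+1)$; $\mathrm{selfed}(X)$ is the minimum unweighted cost of a self-alignment. *)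

From Stdlib Require Import ClassicalEpsilon.
From mathcomp Require Import all_boot zify.
Set Implicit Arguments. Unset Strict Implicit. Unset Printing Implicit Defensive.

(* Strings over an alphabet Sigma are  seq Sigma  with Sigma : eqType.
   An alignment of X onto Y is represented by its sequence of grid points
   (x_0,y_0), ..., (x_m,y_m). *)

Definition step_ok (p q : nat * nat) : bool :=
  [|| (q == (p.1.+1, p.2)), (q == (p.1, p.2.+1)) | (q == (p.1.+1, p.2.+1))].

Definition is_diag (p q : nat * nat) : bool := q == (p.1.+1, p.2.+1).

Definition is_alignment (Sigma : eqType) (X Y : seq Sigma) (A : seq (nat * nat)) : Prop :=
  match A with
  | [::] => False
  | p0 :: rest => [/\ p0 = (0, 0), last p0 rest = (size X, size Y)
                    & path step_ok p0 rest]
  end.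

Definition edges (A : seq (nat * nat)) : seq ((nat * nat) * (nat * nat)) :=
  match A with
  | [::] => [::]
  | p0 :: rest => zip (p0 :: rest) rest
  end.

Definition diag_edges (A : seq (nat * nat)) : seq ((nat * nat) * (nat * nat)) :=
  [seq e <- edges A | is_diag e.1 e.2].

Definition step_cost (Sigma : eqType) (X Y : seq Sigma) (e : (nat * nat) * (nat * nat)) : nat :=
  if is_diag e.1 e.2 then
    (if (e.1.1 < size X) && (e.1.2 < size Y) then
       match nth None (map Some X) e.1.1, nth None (map Some Y) e.1.2 with
       | Some a, Some b => nat_of_bool (a != b)
       | _, _ => 1
       end
     else 1)
  else 1.

Definition ed_align (Sigma : eqType) (X Y : seq Sigma) (A : seq (nat * nat)) : nat :=
  \sum_(e <- edges A) step_cost X Y e.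

Definition is_self_alignment (Sigma : eqType) (X : seq Sigma) (A : seq (nat * nat)) : Prop :=
  is_alignment X X A /\ forall x, ((x, x), (x.+1, x.+1)) \notin edges A.

(* witness: the path (0,0),(0,1),...,(0,n),(1,n),...,(n,n) *)
Fixpoint hpath (x y k : nat) : seq (nat * nat) :=
  match k with 0 => [::] | k'.+1 => (x.+1, y) :: hpath x.+1 y k' end.
Fixpoint vpath (x y k : nat) : seq (nat * nat) :=
  match k with 0 => [::] | k'.+1 => (x, y.+1) :: vpath x y.+1 k' end.

Lemma vpath_ok x y k : path step_ok (x, y) (vpath x y k) /\ last (x, y) (vpath x y k) = (x, y + k)
   /\ forall e, e \in zip ((x, y) :: vpath x y k) (vpath x y k) -> ~~ is_diag e.1 e.2.
Proof.
elim: k x y => [|k IH] x y /=; first by rewrite addn0; split=> //; split=> //.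
have [H1 [H2 H3]] := IH x y.+1.
split; first by rewrite H1 /step_ok eqxx /= orbT.
split; first by rewrite H2 addSnnS.
move=> e; rewrite inE => /orP [/eqP -> | He]; last exact: H3.
rewrite /is_diag /=; apply/negP => /eqP [] H; lia.
Qed.

Lemma hpath_ok x y k : path step_ok (x, y) (hpath x y k) /\ last (x, y) (hpath x y k) = (x + k, y)
   /\ forall e, e \in zip ((x, y) :: hpath x y k) (hpath x y k) -> ~~ is_diag e.1 e.2.
Proof.
elim: k x y => [|k IH] x y /=; first by rewrite addn0; split=> //; split=> //.
have [H1 [H2 H3]] := IH x.+1 y.
split; first by rewrite H1 /step_ok eqxx.
split; first by rewrite H2 addSnnS.
move=> e; rewrite inE => /orP [/eqP -> | He]; last exact: H3.
rewrite /is_diag /=; apply/negP => /eqP [] H; lia.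
Qed.

Lemma zip_cons_cat (T : Type) (a : T) (s t : seq T) :
  zip (a :: s ++ t) (s ++ t) = zip (a :: s) s ++ zip (last a s :: t) t.
Proof. by elim: s a => [|b s IH] a //=; rewrite IH. Qed.

Lemma selfed_exists (Sigma : eqType) (X : seq Sigma) :
  exists k, exists A, is_self_alignment X A /\ ed_align X X A = k.
Proof.
set n := size X.
exists (ed_align X X ((0, 0) :: vpath 0 0 n ++ hpath 0 n n)).
exists ((0, 0) :: vpath 0 0 n ++ hpath 0 n n); split=> //.
have [V1 [V2 V3]] := vpath_ok 0 0 n.
have [H1 [H2 H3]] := hpath_ok 0 n n.
rewrite add0n in V2; rewrite add0n in H2.
split.
  rewrite /is_alignment last_cat V2 H2 cat_path V1 V2 H1; split=> //.
move=> x; apply/negP => Hin.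
have Hd : is_diag (x, x) (x.+1, x.+1) by rewrite /is_diag.
move: Hin; rewrite /edges.
rewrite zip_cons_cat V2.
rewrite mem_cat => /orP [H | H].
  by move: (V3 _ H); rewrite Hd.
by move: (H3 _ H); rewrite Hd.
Qed.

Definition has_self_cost (Sigma : eqType) (X : seq Sigma) (k : nat) : bool :=
  if excluded_middle_informative
       (exists A, is_self_alignment X A /\ ed_align X X A = k) then true else false.

Lemma has_self_cost_exists (Sigma : eqType) (X : seq Sigma) : exists k, has_self_cost X k.
Proof.
have [k Hk] := selfed_exists X; exists k.
by rewrite /has_self_cost; case: excluded_middle_informative.
Qed.

Definition selfed (Sigma : eqType) (X : seq Sigma) : nat :=
  ex_minn (has_self_cost_exists X).

(* Reversing A' gives an alignment of Y onto X, and composing A with it through Y gives an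
   alignment of X onto X. Each step of the composite is paid for by the steps of A and A'
   it comes from; for a pair of diagonal steps this is the triangle inequality for
   character mismatches. A composite diagonal step (x,x) -> (x+1,x+1) can only arise from
   diagonal steps (x,y) -> (x+1,y+1) in both A and A', i.e. from a shared diagonal edge,
   so the composite is a self-alignment. *)

From Stdlib Require Import ClassicalEpsilon.
From mathcomp Require Import all_boot zify.
Set Implicit Arguments. Unset Strict Implicit. Unset Printing Implicit Defensive.

Inductive step := StepX | StepY | StepXY.

Definition advance (o : step) (p : nat * nat) : nat * nat :=
  match o with
  | StepX => (p.1.+1, p.2)
  | StepY => (p.1, p.2.+1)
  | StepXY => (p.1.+1, p.2.+1)
  end.

Definition moves_x : pred step := fun o => if o is StepY then false else true.
Definition moves_y : pred step := fun o => if o is StepX then false else true.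

Fixpoint walk (p : nat * nat) (s : seq step) : seq (nat * nat) :=
  if s is o :: s' then advance o p :: walk (advance o p) s' else [::].

Lemma last_walk p s :
  last p (walk p s) = (p.1 + count moves_x s, p.2 + count moves_y s).
Proof.
elim: s p => [|o s IHs] [x y] /=; first by rewrite !addn0.
by rewrite IHs; case: o => /=; congr pair; lia.
Qed.

Lemma path_walk p s : path step_ok p (walk p s).
Proof.
elim: s p => [|o s IHs] [x y] //=.
by rewrite IHs andbT /step_ok; case: o; rewrite /= eqxx ?orbT.
Qed.

Lemma walk_of_path p r : path step_ok p r -> exists s, r = walk p s.
Proof.
elim: r p => [|q r IHr] p /=; first by exists [::].
case/andP=> /or3P[] /eqP -> /IHr[s ->];
  [exists (StepX :: s) | exists (StepY :: s) | exists (StepXY :: s)]; by [].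
Qed.

Lemma alignment_walk (Sigma : eqType) (X Y : seq Sigma) A :
  is_alignment X Y A ->
  exists2 s, A = (0, 0) :: walk (0, 0) s &
             count moves_x s = size X /\ count moves_y s = size Y.
Proof.
case: A => [|p r] //= [-> last_r /walk_of_path[s r_eq]]; subst r.
by move: last_r; rewrite last_walk !add0n => -[<- <-]; exists s.
Qed.

Lemma walk_alignment (Sigma : eqType) (X Y : seq Sigma) s :
  count moves_x s = size X -> count moves_y s = size Y ->
  is_alignment X Y ((0, 0) :: walk (0, 0) s).
Proof. by move=> sx sy; split; rewrite ?last_walk ?add0n ?sx ?sy ?path_walk. Qed.

Lemma edges_walk_cons p o s :
  edges (p :: walk p (o :: s)) =
  (p, advance o p) :: edges (advance o p :: walk (advance o p) s).
Proof. by []. Qed.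

Lemma ed_align_walk_cons (Sigma : eqType) (X Y : seq Sigma) p o s :
  ed_align X Y (p :: walk p (o :: s)) =
  step_cost X Y (p, advance o p) + ed_align X Y (advance o p :: walk (advance o p) s).
Proof. by rewrite /ed_align edges_walk_cons big_cons. Qed.

Lemma ed_align_walk_nil (Sigma : eqType) (X Y : seq Sigma) p : ed_align X Y [:: p] = 0.
Proof. by rewrite /ed_align big_nil. Qed.

Fixpoint diag_starts (p : nat * nat) (s : seq step) : seq (nat * nat) :=
  match s with
  | [::] => [::]
  | StepXY :: s' => p :: diag_starts (advance StepXY p) s'
  | o :: s' => diag_starts (advance o p) s'
  end.

Lemma diag_edge_walk p s q :
  ((q, (q.1.+1, q.2.+1)) \in edges (p :: walk p s)) = (q \in diag_starts p s).
Proof.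
elim: s p => [|o s IHs] [x y] //.
rewrite edges_walk_cons in_cons {}IHs; case: q => a b.
case: o; rewrite /= ?in_cons; last by congr (_ || _); apply/eqP/eqP => -[-> ->].
all: by case: eqP => [[*]|_] //; lia.
Qed.

Lemma mem_diag_edges_walk p s q :
  ((q, (q.1.+1, q.2.+1)) \in diag_edges (p :: walk p s)) = (q \in diag_starts p s).
Proof. by rewrite mem_filter /is_diag eqxx diag_edge_walk. Qed.

Definition diag_cost (Sigma : eqType) (X Y : seq Sigma) x y :=
  step_cost X Y ((x, y), (x.+1, y.+1)).

Lemma diag_costE (Sigma : eqType) (X Y : seq Sigma) x y :
  diag_cost X Y x y = ~~ ((x < size X) && (onth X x == onth Y y)).
Proof.
rewrite /diag_cost /step_cost /is_diag eqxx /= -!onthE.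
have := onthTE X x; have := onthTE Y y.
by case: (onth X x) => [a|]; case: (onth Y y) => [b|] //= <- <-.
Qed.

Lemma diag_cost_triangle (Sigma : eqType) (X Y Z : seq Sigma) x y z :
  diag_cost X Z x z <= diag_cost X Y x y + diag_cost Z Y z y.
Proof.
rewrite !diag_costE.
have [/andP[xX /eqP->] | _] := boolP ((x < size X) && (onth X x == onth Y y));
  last by case: (~~ _).
have [/andP[_ /eqP->] | _] := boolP ((z < size Z) && (onth Z z == onth Y y));
  last by rewrite addnC; case: (~~ _).
by rewrite xX eqxx.
Qed.

Lemma step_cost_advance (Sigma : eqType) (X Y : seq Sigma) o p :
  step_cost X Y (p, advance o p) = if o is StepXY then diag_cost X Y p.1 p.2 else 1.
Proof.
case: p => x y; case: o => //=; rewrite /step_cost /is_diag /=.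
all: by case: eqP => // -[]; lia.
Qed.

(* For an alignment [s1] of X onto Y and an alignment [s2] of Z onto Y, [compose s1 s2]
   aligns X onto Z by pairing the steps of [s1] and [s2] that consume the same
   character of Y; the result is meaningless unless both consume all of Y. *)
Fixpoint compose (s1 s2 : seq step) {struct s1} : seq step :=
  match s1 with
  | [::] => [seq StepY | _ <- s2]
  | StepX :: s1' => StepX :: compose s1' s2
  | o :: s1' =>
    (fix pair_with (s2 : seq step) : seq step :=
       match s2 with
       | [::] => [::]
       | StepX :: s2' => StepY :: pair_with s2'
       | StepY :: s2' => if o is StepY then compose s1' s2' else StepX :: compose s1' s2'
       | StepXY :: s2' =>
         if o is StepY then StepY :: compose s1' s2' else StepXY :: compose s1' s2'
       end) s2
  end.

Lemma compose_ind (P : seq step -> seq step -> seq step -> Prop) :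
  (forall s2, P [::] s2 [seq StepY | _ <- s2]) ->
  (forall s1 s2 t, P s1 s2 t -> P (StepX :: s1) s2 (StepX :: t)) ->
  (forall o s1, moves_y o -> P (o :: s1) [::] [::]) ->
  (forall o s1 s2 t, moves_y o -> P (o :: s1) s2 t -> P (o :: s1) (StepX :: s2) (StepY :: t)) ->
  (forall s1 s2 t, P s1 s2 t -> P (StepY :: s1) (StepY :: s2) t) ->
  (forall s1 s2 t, P s1 s2 t -> P (StepY :: s1) (StepXY :: s2) (StepY :: t)) ->
  (forall s1 s2 t, P s1 s2 t -> P (StepXY :: s1) (StepY :: s2) (StepX :: t)) ->
  (forall s1 s2 t, P s1 s2 t -> P (StepXY :: s1) (StepXY :: s2) (StepXY :: t)) ->
  forall s1 s2, P s1 s2 (compose s1 s2).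
Proof.
move=> Pnil PX Pend PXs2 PYY PYXY PXYY PXYXY.
elim=> [|o s1 IHs1] s2 //=; case: o => /=; first exact: PX.
all: by elim: s2 => [|[] s2 IHs2]; [apply: Pend | apply: PXs2 | auto | auto].
Qed.

Arguments compose : simpl never.

Lemma count_compose s1 s2 : count moves_y s1 = count moves_y s2 ->
  count moves_x (compose s1 s2) = count moves_x s1 /\
  count moves_y (compose s1 s2) = count moves_x s2.
Proof.
elim/compose_ind: s1 s2 / (compose s1 s2) => /=.
- by elim=> [|[] s2 IHs2] //=; rewrite !add0n => /IHs2[-> ->].
- by move=> s1 s2 t IH; rewrite !add0n => /IH[-> ->].
- by case.
- by move=> o s1 s2 t _ IH; rewrite !add0n => /IH[-> ->].
all: by move=> s1 s2 t IH; rewrite ?add0n => /addnI/IH[-> ->].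
Qed.

Lemma ed_align_compose (Sigma : eqType) (X Y Z : seq Sigma) s1 s2 x y z :
  count moves_y s1 = count moves_y s2 ->
  ed_align X Z ((x, z) :: walk (x, z) (compose s1 s2)) <=
  ed_align X Y ((x, y) :: walk (x, y) s1) + ed_align Z Y ((z, y) :: walk (z, y) s2).
Proof.
move: x y z; elim/compose_ind: s1 s2 / (compose s1 s2).
- move=> s2 x y z; rewrite ed_align_walk_nil.
  elim: s2 z => [|o s2 IHs2] z; first by rewrite ed_align_walk_nil.
  rewrite map_cons !ed_align_walk_cons !step_cost_advance.
  by case: o => //=; rewrite add0n => /(IHs2 z.+1); lia.
- move=> s1 s2 t IH x y z; rewrite !ed_align_walk_cons !step_cost_advance /= add0n.
  by move=> /(IH x.+1 y z); lia.
- by case.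
- (* [set] keeps [/=] from unfolding the walk of [o :: s1], which is not advanced *)
  move=> o s1 s2 t _ IH x y z; set e1 := ed_align X Y _.
  rewrite !ed_align_walk_cons !step_cost_advance /= add0n.
  by move=> /(IH x y z.+1); lia.
- move=> s1 s2 t IH x y z; rewrite !ed_align_walk_cons !step_cost_advance /=.
  by move=> /addnI/(IH x y.+1 z); lia.
- move=> s1 s2 t IH x y z; rewrite !ed_align_walk_cons !step_cost_advance /=.
  by move=> /addnI/(IH x y.+1 z.+1); lia.
- move=> s1 s2 t IH x y z; rewrite !ed_align_walk_cons !step_cost_advance /=.
  by move=> /addnI/(IH x.+1 y.+1 z); lia.
- move=> s1 s2 t IH x y z; rewrite !ed_align_walk_cons !step_cost_advance /=.
  by move=> /addnI/(IH x.+1 y.+1 z.+1); have := diag_cost_triangle X Y Z x y z; lia.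
Qed.

Lemma compose_offdiag s1 s2 x y z :
  {in diag_starts (x, y) s1, forall q, q \notin diag_starts (z, y) s2} ->
  forall w, (w, w) \notin diag_starts (x, z) (compose s1 s2).
Proof.
move: x y z; elim/compose_ind: s1 s2 / (compose s1 s2).
- by move=> s2 x y z _ w; elim: s2 z => [|o s2 IHs2] z; last exact: IHs2.
- by move=> s1 s2 t IH x y z /IH.
- by [].
- by move=> o s1 s2 t _ IH x y z /(IH x y z.+1).
- by move=> s1 s2 t IH x y z /IH.
- move=> s1 s2 t IH x y z disj; apply: (IH x y.+1 z.+1) => q /disj.
  by rewrite in_cons negb_or => /andP[].
- move=> s1 s2 t IH x y z disj; apply: (IH x.+1 y.+1 z) => q q_in.
  by apply: disj; rewrite in_cons q_in orbT.
- move=> s1 s2 t IH x y z disj w; rewrite in_cons negb_or; apply/andP; split.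
    apply: contraTneq (disj (x, y) (mem_head _ _)) => -[<- <-].
    by rewrite mem_head.
  apply: (IH x.+1 y.+1 z.+1) => q q_in.
  by have := disj q; rewrite !in_cons q_in orbT negb_or => /(_ isT) /andP[].
Qed.

Lemma selfed_le (Sigma : eqType) (X : seq Sigma) A :
  is_self_alignment X A -> selfed X <= ed_align X X A.
Proof.
move=> selfA; rewrite /selfed; case: ex_minnP => m _; apply.
by rewrite /has_self_cost; case: excluded_middle_informative => // -[]; exists A.
Qed.

Theorem lemma4p3 (Sigma : eqType) (X Y : seq Sigma) (A A' : seq (nat * nat)) :
  is_alignment X Y A -> is_alignment X Y A' ->
  (forall e, e \in diag_edges A -> e \notin diag_edges A') ->
  (selfed X <= ed_align X Y A + ed_align X Y A')%N.
Proof.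
move=> /alignment_walk[s1 -> [s1x s1y]] /alignment_walk[s2 -> [s2x s2y]] disj.
have s12y : count moves_y s1 = count moves_y s2 by rewrite s1y s2y.
have [cx cy] := count_compose s12y.
have selfC : is_self_alignment X ((0, 0) :: walk (0, 0) (compose s1 s2)).
  split=> [|w]; first by apply: walk_alignment; rewrite ?cx ?cy.
  rewrite diag_edge_walk; apply: (compose_offdiag (y := 0)) => q q1.
  by move: (disj (q, (q.1.+1, q.2.+1))); rewrite !mem_diag_edges_walk => /(_ q1).
apply: leq_trans (selfed_le selfC) _.
exact: ed_align_compose.
Qed.
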